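(* Let $G$ be a trigraph containing a fence gadget $F$ (with sides $A$, $B$) attached to a set $S$. In any partial contraction sequence from $G$, if the first contraction that involves two vertices of $V(F)$ involves a pair $(a_i,b_j)$ with $a_i\in A$, $b_j\in B$, then the vertex created by it has at least $3$ red neighbours whose parts intersect $V(F)$.
   Context: A trigraph $G$ consists of a vertex set $V(G)$ and two disjoint sets of unordered pairs of distinct vertices: black edges and red edges. Contracting two distinct vertices $u,v$ replaces them by a new vertex $w$ such that, for every other vertex $z$, $wz$ is black if $uz,vz$ are both black, a non-edge if both are non-edges, and red otherwise. In a partial contraction sequence from $G$, each vertex $u$ of a later trigraph corresponds to the set $u(G)$ (its part) of vertices of $G$ merged into it; a contraction of $u,u'$ involves a vertex $v$ of $G$ if $v\in u(G)\cup u'(G)$, and involves a pair $v,v'$ if $v\in u(G),v'\in u'(G)$ or vice versa. A fence gadget is a trigraph $F$ on $A\cup B$, $A=\{a_1,\dots,a_6\}$, $B=\{b_1,\dots,b_6\}$, whose black edges are those of the cycles $a_1a_2a_3a_4a_5a_6a_1$ and $b_1b_2b_3b_4b_5b_6b_1$ together with $b_1a_6$, and whose red edges are $a_ib_i$ for $i\in[6]$ and $a_ib_{i+1}$ for $i\in[5]$. Inside a trigraph $G$, a fence gadget $F$ is attached to a nonempty set $S\subseteq V(G)\setminus V(F)$ if every vertex of $A$ is joined by a black edge to every vertex of $S$ and no vertex of $B$ is adjacent to a vertex of $S$. *)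

From mathcomp Require Import all_boot.

Set Implicit Arguments. Unset Strict Implicit. Unset Printing Implicit Defensive.

Inductive ecol := NoE | BlackE | RedE.

Definition isRed (e : ecol) : bool := if e is RedE then true else false.

Record trigraph (V : finType) := Trigraph {
  tadj : V -> V -> ecol;
  tadj_sym : forall x y, tadj x y = tadj y x;
  tadj_irr : forall x, tadj x x = NoE }.

(* A trigraph obtained from G by contractions: its vertices are their parts
   (subsets of V(G)), together with the colouring between vertices. *)
Record cstate (V : finType) := CState {
  parts : {set {set V}};
  cadj : {set V} -> {set V} -> ecol }.

Definition init_state (V : finType) (G : trigraph V) : cstate V :=
  CState [set [set v] | v : V]
    (fun P Q => match [pick x | P == [set x]], [pick y | Q == [set y]] with
                | Some x, Some y => tadj G x y
                | _, _ => NoE end).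

(* Contraction rule for the edge wz from uz and vz. *)
Definition merge (e1 e2 : ecol) : ecol :=
  match e1, e2 with
  | BlackE, BlackE => BlackE
  | NoE, NoE => NoE
  | _, _ => RedE end.

Definition contract (V : finType) (s : cstate V) (u v : {set V}) : cstate V :=
  let w := u :|: v in
  CState ((parts s :\ u :\ v) :|: [set w])
    (fun P Q => if P == w then (if Q == w then NoE
                                else merge (cadj s u Q) (cadj s v Q))
                else if Q == w then merge (cadj s P u) (cadj s P v)
                else cadj s P Q).

Fixpoint run (V : finType) (s : cstate V) (l : seq ({set V} * {set V}))
  : option (cstate V) :=
  match l with
  | [::] => Some s
  | (u, v) :: l' =>
      if [&& u \in parts s, v \in parts s & u != v]
      then run (contract s u v) l' else None
  end.

Definition involves_pair (V : finType) (u u' : {set V}) (x y : V) : bool :=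
  ((x \in u) && (y \in u')) || ((x \in u') && (y \in u)).

(* Fence gadget, indices shifted: a_i is (a (i-1)), i = 1..6. *)
Definition cyc6 (i j : 'I_6) : bool :=
  (j == i.+1 %% 6 :> nat) || (i == j.+1 %% 6 :> nat).

Definition is_fence (V : finType) (G : trigraph V) (a b : 'I_6 -> V) : Prop :=
  [/\ injective a, injective b, (forall i j, a i != b j) &
   [/\ (forall i j, tadj G (a i) (a j) = if cyc6 i j then BlackE else NoE),
      (forall i j, tadj G (b i) (b j) = if cyc6 i j then BlackE else NoE) &
      (forall i j : 'I_6, tadj G (a i) (b j) =
         if (j == i :> nat) || (j == i.+1 :> nat) then RedE
         else if (i == 5 :> nat) && (j == 0 :> nat) then BlackE else NoE)]].

Definition fenceV (V : finType) (a b : 'I_6 -> V) : {set V} :=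
  [set x | [exists i, x == a i] || [exists i, x == b i]].

Definition attached (V : finType) (G : trigraph V) (a b : 'I_6 -> V)
  (S : {set V}) : Prop :=
  [/\ S != set0, S \subset ~: fenceV a b,
      (forall i, forall s, s \in S -> tadj G (a i) s = BlackE) &
      (forall i, forall s, s \in S -> tadj G (b i) s = NoE)].

From Pilot Require Import Defs.
From mathcomp Require Import all_boot.
Set Implicit Arguments. Unset Strict Implicit. Unset Printing Implicit Defensive.

(* Before the first contraction involving two vertices of the gadget F, every
   part meets F in at most one vertex, and black edges and non-edges between
   parts are faithful to G. So when the parts of a_i and b_j are contracted,
   every other vertex x of F whose colours towards a_i and b_j differ sits in
   its own part, which becomes a red neighbour of the new vertex. A finite
   check on the gadget shows that every pair a_i, b_j has at least three such
   x. *)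

Local Notation merge := Defs.merge.

Lemma isRed_mergeC e1 e2 : isRed (merge e1 e2) = isRed (merge e2 e1).
Proof. by case: e1; case: e2. Qed.

Lemma merge_nonred e1 e2 : ~~ isRed (merge e1 e2) ->
  [/\ ~~ isRed e1, ~~ isRed e2, merge e1 e2 = e1 & merge e1 e2 = e2].
Proof. by case: e1; case: e2. Qed.

Lemma isRed_merge_refine e1 e2 f1 f2 :
  (~~ isRed e1 -> f1 = e1) -> (~~ isRed e2 -> f2 = e2) ->
  isRed (merge f1 f2) -> isRed (merge e1 e2).
Proof. by case: e1; case: e2; case: f1; case: f2 => // /(_ isT) + /(_ isT). Qed.

Section ContractionSequences.

Variables (V : finType) (G : trigraph V).
Implicit Types (s t : cstate V) (u v P Q F X : {set V}).

Lemma run_cat s l1 l2 : run s (l1 ++ l2) = obind (fun s1 => run s1 l2) (run s l1).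
Proof. by elim: l1 s => [|[u v] l1 IH] s //=; case: ifP. Qed.

Lemma run_nth_parts s0 l k s u v :
  (exists s', run s0 l = Some s') -> run s0 (take k l) = Some s -> k < size l ->
  nth (set0, set0) l k = (u, v) -> u \in parts s /\ v \in parts s.
Proof.
move=> [s'] + Hs Hk Huv; rewrite -(cat_take_drop k l) run_cat.
by rewrite Hs /= (drop_nth (set0, set0) Hk) Huv /=; case: ifP => // /and3P [].
Qed.

Lemma run_invariant (I : cstate V -> Prop) s l s' :
  (forall t u v, (u, v) \in l -> I t -> u \in parts t -> v \in parts t ->
     I (contract t u v)) ->
  I s -> run s l = Some s' -> I s'.
Proof.
elim: l s => [|[u v] l IH] s Hstep Is /=; first by case=> <-.
case: ifP => // /and3P [Hu Hv _]; apply: IH => [t u' v' Hl|].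
  by apply: Hstep; rewrite inE Hl orbT.
by apply: Hstep; rewrite ?mem_head.
Qed.

Lemma parts_contract s u v P :
  P \in parts s -> P != u -> P != v -> P \in parts (contract s u v).
Proof. by move=> HP Pu Pv; rewrite !inE Pu Pv HP. Qed.

Lemma parts_contractP s u v P :
  P \in parts (contract s u v) -> P != u :|: v ->
  [/\ P \in parts s, P != u & P != v].
Proof. by rewrite !inE => /orP [/and3P [-> -> ->]|->]. Qed.

Definition covering s := forall x, exists2 P, P \in parts s & x \in P.

Definition sound s :=
  forall P Q p q, P \in parts s -> Q \in parts s -> P != Q -> p \in P -> q \in Q ->
  ~~ isRed (cadj s P Q) -> tadj G p q = cadj s P Q.

Lemma covering_init : covering (init_state G).
Proof. by move=> x; exists [set x]; [apply/imsetP; exists x | rewrite inE]. Qed.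

Lemma sound_init : sound (init_state G).
Proof.
move=> P Q p q /imsetP [x _ ->] /imsetP [y _ ->] _ /=.
rewrite !inE => /eqP -> /eqP -> _.
case: pickP => [x' /eqP /set1_inj ->|/(_ x)]; last by rewrite eqxx.
by case: pickP => [y' /eqP /set1_inj ->|/(_ y)]; last by rewrite eqxx.
Qed.

Lemma covering_contract s u v : covering s -> covering (contract s u v).
Proof.
move=> cov x; have [P HP xP] := cov x.
have [/orP [] /eqP EP|] := boolP ((P == u) || (P == v)).
- by exists (u :|: v); rewrite ?inE ?eqxx ?orbT // -EP xP.
- by exists (u :|: v); rewrite ?inE ?eqxx ?orbT // -EP xP orbT.
by rewrite negb_or => /andP [Pu Pv]; exists P; rewrite ?parts_contract.
Qed.

Lemma sound_contract s u v :
  sound s -> u \in parts s -> v \in parts s -> sound (contract s u v).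
Proof.
move=> snd Hu Hv P Q p q HP HQ PQ /=.
have [EP|nP] := eqVneq P (u :|: v); have [EQ|nQ] := eqVneq Q (u :|: v).
- by rewrite EP EQ eqxx in PQ.
- have [HQ' Qu Qv] := parts_contractP HQ nQ.
  rewrite EP inE => pw qQ /merge_nonred [nr1 nr2 E1 E2].
  by case/orP: pw => pw; [rewrite E1 | rewrite E2]; apply: snd; rewrite // eq_sym.
- have [HP' Pu Pv] := parts_contractP HP nP.
  rewrite EQ inE => pP qw /merge_nonred [nr1 nr2 E1 E2].
  by case/orP: qw => qw; [rewrite E1 | rewrite E2]; apply: snd.
have [HP' _ _] := parts_contractP HP nP; have [HQ' _ _] := parts_contractP HQ nQ.
exact: snd.
Qed.

Lemma run_covering_sound l s :
  run (init_state G) l = Some s -> covering s /\ sound s.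
Proof.
apply: (run_invariant (I := fun t => covering t /\ sound t)); last first.
  by split; [apply: covering_init | apply: sound_init].
by move=> t u v _ [cov snd] Hu Hv; split;
  [apply: covering_contract | apply: sound_contract].
Qed.

Definition separated F s :=
  forall P x y, P \in parts s -> x \in F -> y \in F -> x \in P -> y \in P -> x = y.

Definition avoids_pairs_in F (p : {set V} * {set V}) :=
  ~~ [exists x in F, exists y in F, involves_pair p.1 p.2 x y].

Lemma separated_contract F s u v :
  separated F s -> u \in parts s -> v \in parts s -> avoids_pairs_in F (u, v) ->
  separated F (contract s u v).
Proof.
move=> sep Hu Hv /existsPn avoid P x y; rewrite !inE => /orP [/and3P [_ _ HP]|/eqP ->].
  exact: sep.
have split_uv z z' : z \in F -> z' \in F -> z \in u -> z' \in v -> False.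
  move=> zF z'F zu z'v; move/(_ z): avoid; rewrite zF /=.
  by move/existsPn/(_ z'); rewrite z'F /involves_pair zu z'v.
move=> xF yF; rewrite !inE => /orP [] xuv /orP [] yuv.
- exact: (sep u).
- by case: (split_uv x y).
- by case: (split_uv y x).
- exact: (sep v).
Qed.

Lemma run_separated F l s :
  run (init_state G) l = Some s -> {in l, forall p, avoids_pairs_in F p} ->
  separated F s.
Proof.
move=> Hs avoid; apply: (run_invariant (I := separated F)) Hs => [t u v Hl sep Hu Hv|].
  exact: separated_contract (avoid _ Hl).
by move=> P x y /imsetP [z _ ->] _ _; rewrite !inE => /eqP -> /eqP ->.
Qed.

Definition part_of s x := odflt set0 [pick P in parts s | x \in P].

Lemma part_ofP s x : covering s -> part_of s x \in parts s /\ x \in part_of s x.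
Proof.
rewrite /part_of => cov; case: pickP => [P /andP [] //|none].
by have [P HP xP] := cov x; move: (none P); rewrite HP xP.
Qed.

Definition red_neighbours_meeting F s w :=
  [set z in parts s | isRed (cadj s w z) & z :&: F != set0].

(* Soundness lets colours between parts only refine colours in G, so the part
   of a vertex seeing ya and yb differently is red to u :|: v. *)
Lemma red_neighbour_contract F s u v ya yb P x :
  sound s -> separated F s -> u \in parts s -> v \in parts s ->
  involves_pair u v ya yb -> ya \in F -> yb \in F ->
  P \in parts s -> x \in P -> x \in F -> x != ya -> x != yb ->
  isRed (merge (tadj G ya x) (tadj G yb x)) ->
  P \in red_neighbours_meeting F (contract s u v) (u :|: v).
Proof.
move=> snd sep Hu Hv pair yaF ybF HP xP xF xa xb Hred.
wlog [yau ybv] : ya yb pair yaF ybF xa xb Hred / ya \in u /\ yb \in v.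
  move=> gen; case/orP: (pair) => /andP [yau ybv]; first exact: gen (conj yau ybv).
  apply: (gen yb ya) => //; first by rewrite /involves_pair yau ybv.
  by rewrite isRed_mergeC.
have Pu : P != u by apply: contra_neq xa => EP; apply: (sep u); rewrite // -EP.
have Pv : P != v by apply: contra_neq xb => EP; apply: (sep v); rewrite // -EP.
have Pw : P != u :|: v.
  apply: contraTneq xP => ->; rewrite inE negb_or.
  apply/andP; split; apply/negP => xuv.
  - by move: xa; rewrite (sep u x ya) ?eqxx.
  - by move: xb; rewrite (sep v x yb) ?eqxx.
rewrite inE parts_contract //= eqxx (negbTE Pw) /=; apply/andP; split.
  apply: isRed_merge_refine Hred; apply: snd; by rewrite // eq_sym.
by apply/set0Pn; exists x; rewrite !inE xP xF.
Qed.

Lemma card_red_neighbours_contract F X s u v ya yb :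
  covering s -> sound s -> separated F s ->
  u \in parts s -> v \in parts s -> involves_pair u v ya yb ->
  ya \in F -> yb \in F -> X \subset F ->
  {in X, forall x, [&& x != ya, x != yb & isRed (merge (tadj G ya x) (tadj G yb x))]} ->
  #|X| <= #|red_neighbours_meeting F (contract s u v) (u :|: v)|.
Proof.
move=> cov snd sep Hu Hv pair yaF ybF /subsetP XF HX.
have part_inj : {in X &, injective (part_of s)}.
  move=> x y xX yX E; have [Px xPx] := part_ofP x cov; have [_ yPy] := part_ofP y cov.
  by apply: (sep (part_of s x)); rewrite ?XF // E.
rewrite -(card_in_imset part_inj); apply/subset_leq_card/subsetP => _ /imsetP [x xX ->].
have [Px xPx] := part_ofP x cov; have /and3P [xa xb red] := HX x xX.
exact: red_neighbour_contract pair yaF ybF Px xPx (XF x xX) xa xb red.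
Qed.

End ContractionSequences.

(* Vertices of the gadget are indexed by [bool * 'I_6]: [(false, i)] is a_(i+1)
   and [(true, i)] is b_(i+1). *)
Definition fence_vertex (V : finType) (a b : 'I_6 -> V) (t : bool * 'I_6) : V :=
  if t.1 then b t.2 else a t.2.

Definition fence_cross (i k : 'I_6) : ecol :=
  if (k == i :> nat) || (k == i.+1 :> nat) then RedE
  else if (i == 5 :> nat) && (k == 0 :> nat) then BlackE else NoE.

Definition fence_col (t t' : bool * 'I_6) : ecol :=
  match t.1, t'.1 with
  | false, true => fence_cross t.2 t'.2
  | true, false => fence_cross t'.2 t.2
  | _, _ => if cyc6 t.2 t'.2 then BlackE else NoE
  end.

Section FenceGadget.

Variables (V : finType) (G : trigraph V) (a b : 'I_6 -> V).
Hypothesis fence : is_fence G a b.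

Lemma fence_vertex_inj : injective (fence_vertex a b).
Proof.
have [ia ib ab _] := fence.
case=> [[] k1] [[] k2]; rewrite /fence_vertex /= => E.
- by rewrite (ib _ _ E).
- by move: (ab k2 k1); rewrite E eqxx.
- by move: (ab k1 k2); rewrite E eqxx.
- by rewrite (ia _ _ E).
Qed.

Lemma tadj_fence_vertex t t' :
  tadj G (fence_vertex a b t) (fence_vertex a b t') = fence_col t t'.
Proof.
have [_ _ _ [HA HB HAB]] := fence.
case: t t' => [[] k1] [[] k2]; rewrite /fence_vertex /fence_col /= ?HA ?HB ?HAB //.
by rewrite tadj_sym HAB.
Qed.

End FenceGadget.

Lemma fence_vertex_in (V : finType) (a b : 'I_6 -> V) t :
  fence_vertex a b t \in fenceV a b.
Proof.
by case: t => [[] k]; rewrite inE; apply/orP; [right | left]; apply/existsP; exists k.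
Qed.

Definition fence_distinguisher (i j : 'I_6) (t : bool * 'I_6) : bool :=
  [&& t != (false, i), t != (true, j) &
      isRed (merge (fence_col (false, i) t) (fence_col (true, j) t))].

Lemma count_le_card (T : finType) (P : pred T) (s : seq T) :
  uniq s -> count P s <= #|P|.
Proof.
move=> s_uniq; rewrite -size_filter -(card_uniqP (filter_uniq P s_uniq)).
by apply/subset_leq_card/subsetP => x; rewrite mem_filter => /andP [].
Qed.

(* Ordinals are listed by hand: enumerating ['I_6] does not reduce under
   [vm_compute], as it goes through the opaque [idP]. *)
Definition ord6 : seq 'I_6 := [:: @Ordinal 6 0 isT; @Ordinal 6 1 isT;
  @Ordinal 6 2 isT; @Ordinal 6 3 isT; @Ordinal 6 4 isT; @Ordinal 6 5 isT].

Lemma mem_ord6 i : i \in ord6.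
Proof. by case: i => [[|[|[|[|[|[|n]]]]]] Hn]. Qed.

Definition fence_indices : seq (bool * 'I_6) :=
  [seq (side, k) | side <- [:: false; true], k <- ord6].

Lemma fence_distinguishers i j : 3 <= #|fence_distinguisher i j|.
Proof.
have counts : all (fun i => all (fun j =>
    3 <= count (fence_distinguisher i j) fence_indices) ord6) ord6.
  by vm_compute.
apply: leq_trans (count_le_card _ (_ : uniq fence_indices)); last by vm_compute.
by move/allP/(_ i (mem_ord6 i))/allP/(_ j (mem_ord6 j)): counts.
Qed.

Theorem lemma4p6 (V : finType) (G : trigraph V) (a b : 'I_6 -> V) (S : {set V})
  (l : seq ({set V} * {set V})) (k : nat) (s : cstate V) (i j : 'I_6) :
  is_fence G a b -> attached G a b S ->
  (exists s_end, run (init_state G) l = Some s_end) ->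
  k < size l ->
  run (init_state G) (take k l) = Some s ->
  (forall p, p \in take k l ->
     ~~ [exists x in fenceV a b, exists y in fenceV a b,
           involves_pair p.1 p.2 x y]) ->
  involves_pair (nth (set0, set0) l k).1 (nth (set0, set0) l k).2 (a i) (b j) ->
  let w := (nth (set0, set0) l k).1 :|: (nth (set0, set0) l k).2 in
  let s' := contract s (nth (set0, set0) l k).1 (nth (set0, set0) l k).2 in
  3 <= #|[set z in parts s' | isRed (cadj s' w z) & z :&: fenceV a b != set0]|.
Proof.
move=> fence _ run_l Hk Hs avoid.
case Ep: (nth (set0, set0) l k) => [u v] /= pair.
have [Hu Hv] := run_nth_parts run_l Hs Hk Ep.
have [cov snd] := run_covering_sound Hs.
have sep := run_separated Hs avoid.
apply: leq_trans (fence_distinguishers i j) _.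
rewrite -(card_imset _ (fence_vertex_inj fence)).
apply: card_red_neighbours_contract cov snd sep Hu Hv pair _ _ _ _.
- exact: (fence_vertex_in a b (false, i)).
- exact: (fence_vertex_in a b (true, j)).
- by apply/subsetP => _ /imsetP [t _ ->]; apply: fence_vertex_in.
move=> _ /imsetP [t distinguishes ->].
rewrite -[a i]/(fence_vertex a b (false, i)) -[b j]/(fence_vertex a b (true, j)).
by rewrite !(inj_eq (fence_vertex_inj fence)) !(tadj_fence_vertex fence).
Qed.
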